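(* For every finite simple graph $G$, $\chi_{DP}(G) \le 2\,AT(G)$.
   Context: Correspondence chromatic number: a correspondence assignment $(L,C)$ for $G$ consists of a list $L(v)$ for each vertex and, for each edge $uv$, a partial matching $C_{uv}$ between $\{u\}\times L(u)$ and $\{v\}\times L(v)$; an $(L,C)$-coloring is a choice $\phi(v)\in L(v)$ for all $v$ such that for every edge $uv$, $(u,\phi(u))$ and $(v,\phi(v))$ are not matched in $C_{uv}$; $\chi_{DP}(G)$ is the least $k$ such that $G$ has an $(L,C)$-coloring for every correspondence assignment with all lists of size $k$. Alon--Tarsi number: for a digraph $D$, an Eulerian subdigraph is a spanning subdigraph $F$ with $d^+_F(v)=d^-_F(v)$ for all $v$, even or odd according to the parity of its number of edges; $AT(G)$ is the minimum $k$ such that some orientation $D$ of $G$ has all outdegrees less than $k$ and the numbers of even and odd Eulerian subdigraphs of $D$ differ. *)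

From mathcomp Require Import all_boot.
Set Implicit Arguments. Unset Strict Implicit. Unset Printing Implicit Defensive.

(* A finite simple graph: vertex type T : finType, adjacency adj : rel T,
   assumed symmetric and irreflexive (hypotheses of the theorem). *)

Section Defs.
Variables (T : finType) (adj : rel T).

(* A correspondence assignment with colour universe C: lists L v : {set C},
   and M u v c d <-> (u,c) is matched to (v,d) in C_uv.  Each C_uv is a
   single (symmetric) partial matching between {u}xL(u) and {v}xL(v),
   present only on edges. *)
Definition correspondence (C : finType) (L : T -> {set C})
    (M : T -> T -> C -> C -> bool) : Prop :=
  [/\ (forall u v c d, M u v c d -> [/\ adj u v, c \in L u & d \in L v]),
      (forall u v c d, M u v c d = M v u d c) &
      (forall u v c d d', M u v c d -> M u v c d' -> d = d')].

Definition corr_coloring (C : finType) (L : T -> {set C})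
    (M : T -> T -> C -> C -> bool) (phi : T -> C) : Prop :=
  (forall v, phi v \in L v) /\
  (forall u v, adj u v -> ~~ M u v (phi u) (phi v)).

Definition dp_colorable (k : nat) : Prop :=
  forall (C : finType) (L : T -> {set C}) (M : T -> T -> C -> C -> bool),
    (forall v, #|L v| = k) -> correspondence L M ->
    exists phi : T -> C, corr_coloring L M phi.

Definition is_chi_DP (k : nat) : Prop :=
  dp_colorable k /\ forall k', dp_colorable k' -> k <= k'.

Definition orientation (D : rel T) : Prop :=
  (forall u v, D u v -> adj u v) /\
  (forall u v, adj u v -> D u v (+) D v u).

Definition arcs (D : rel T) : {set T * T} := [set p | D p.1 p.2].

Definition outdeg (F : {set T * T}) (v : T) : nat := #|[set p in F | p.1 == v]|.
Definition indeg (F : {set T * T}) (v : T) : nat := #|[set p in F | p.2 == v]|.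

Definition eulerian_subdigraphs (D : rel T) : {set {set T * T}} :=
  [set F in powerset (arcs D) | [forall v, outdeg F v == indeg F v]].

Definition even_eulerian (D : rel T) : {set {set T * T}} :=
  [set F in eulerian_subdigraphs D | ~~ odd #|F|].
Definition odd_eulerian (D : rel T) : {set {set T * T}} :=
  [set F in eulerian_subdigraphs D | odd #|F|].

Definition AT_good (k : nat) : Prop :=
  exists D : rel T, [/\ orientation D,
    (forall v, outdeg (arcs D) v < k) &
    #|even_eulerian D| != #|odd_eulerian D|].

Definition is_AT (a : nat) : Prop :=
  AT_good a /\ forall b, AT_good b -> a <= b.

End Defs.

From mathcomp Require Import all_boot zify.
From Stdlib Require Import Classical.

Set Implicit Arguments. Unset Strict Implicit. Unset Printing Implicit Defensive.

(* If every
   outdegree is below a, then any vertex set S spans fewer than a|S| arcs, so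
   the degrees inside S average below 2a and some vertex of S has fewer than
   2a neighbours in S: the colouring number of G is at most 2a.  Colouring
   greedily in the corresponding degeneracy order, each vertex has fewer than
   2a already coloured neighbours, and each of them forbids at most one colour
   of its list through the matching, so lists of size 2a suffice. *)

Definition deg_in (T : finType) (adj : rel T) (S : {set T}) (v : T) : nat :=
  #|[set u in S | adj v u]|.

(* col(G) <= k, where col(G) is 1 + the largest minimum degree of an induced
   subgraph. *)
Definition coloring_number_le (T : finType) (adj : rel T) (k : nat) : Prop :=
  forall S : {set T}, S != set0 -> exists2 v, v \in S & deg_in adj S v < k.

Lemma card_set_in_sum (T : finType) (S : {set T}) (P : pred T) :
  #|[set u in S | P u]| = \sum_(u in S) P u.
Proof.
rewrite -sum1_card big_mkcond [RHS]big_mkcond /=.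
by apply: eq_bigr => u _; rewrite !inE; case: (u \in S); case: (P u).
Qed.

Lemma card_bigcup_le (I T : finType) (P : pred I) (B : I -> {set T}) :
  #|\bigcup_(i | P i) B i| <= \sum_(i | P i) #|B i|.
Proof.
elim/big_rec2: _ => [|i X n _ IH]; first by rewrite cards0.
by rewrite (leq_trans (leq_card_setU _ _)) // leq_add2l.
Qed.

Section Orientation.
Variables (T : finType) (adj D : rel T).
Hypotheses (adj_sym : symmetric adj) (D_orient : orientation adj D).

Lemma orientation_adjE u v : adj u v = D u v + D v u :> nat.
Proof.
have [D_adj adj_xor] := D_orient.
case Duv: (D u v); case Dvu: (D v u) => /=.
- by move: (adj_xor u v (D_adj u v Duv)); rewrite Duv Dvu.
- by rewrite D_adj.
- by rewrite adj_sym D_adj.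
- by case adj_uv: (adj u v) => //; move: (adj_xor u v adj_uv); rewrite Duv Dvu.
Qed.

Lemma outdeg_arcs v : outdeg (arcs D) v = #|[set u | D v u]|.
Proof.
rewrite /outdeg -[RHS](card_imset _ (fun u w (e : (v, u) = (v, w)) => congr1 snd e)).
apply: eq_card => -[w u]; rewrite !inE /=.
apply/andP/imsetP => [[Dwu /eqP wv]|[x]]; first by subst w; exists u; rewrite ?inE.
by rewrite inE => Dvx [-> ->].
Qed.

Lemma sum_deg_in_orientation (S : {set T}) :
  \sum_(v in S) deg_in adj S v = 2 * \sum_(v in S) \sum_(u in S) D v u.
Proof.
rewrite mul2n -addnn [X in _ = _ + X]exchange_big -big_split /=.
apply: eq_bigr => v _; rewrite /deg_in card_set_in_sum -big_split /=.
by apply: eq_bigr => u _; rewrite orientation_adjE.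
Qed.

Lemma coloring_number_le_orientation a :
  (forall v, outdeg (arcs D) v < a) -> coloring_number_le adj (2 * a).
Proof.
move=> outdeg_lt S S_neq0.
have [/exists_inP[v vS deg_v]|/exists_inP deg_ge] :=
  boolP [exists v in S, deg_in adj S v < 2 * a]; first by exists v.
have arcs_in_S : \sum_(v in S) \sum_(u in S) (D v u : nat) + #|S| <= #|S| * a.
  rewrite -sum_nat_const -sum1_card -big_split /=; apply: leq_sum => v _.
  rewrite addn1 (leq_trans _ (outdeg_lt v)) // ltnS outdeg_arcs -card_set_in_sum.
  by apply/subset_leq_card/subsetP => u; rewrite !inE => /andP[].
have deg_sum : #|S| * (2 * a) <= \sum_(v in S) deg_in adj S v.
  rewrite -sum_nat_const; apply: leq_sum => v vS; rewrite leqNgt.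
  by apply/negP => deg_v; apply: deg_ge; exists v.
have : 0 < #|S| by rewrite card_gt0.
by move: deg_sum; rewrite sum_deg_in_orientation; lia.
Qed.

End Orientation.

Section GreedyColoring.
Variables (T : finType) (adj : rel T) (C : finType).
Variables (L : T -> {set C}) (M : T -> T -> C -> C -> bool).
Hypotheses (adj_irr : irreflexive adj) (LM_corr : correspondence adj L M).

Definition partial_coloring (S : {set T}) (phi : T -> C) : Prop :=
  {in S, forall v, phi v \in L v} /\
  {in S &, forall u v, adj u v -> ~~ M u v (phi u) (phi v)}.

Definition blocked (S : {set T}) (phi : T -> C) (v : T) : {set C} :=
  \bigcup_(u | (u \in S) && adj v u) [set c | M v u c (phi u)].

Lemma card_blocked (S : {set T}) (phi : T -> C) (v : T) :
  #|blocked S phi v| <= deg_in adj S v.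
Proof.
have [_ M_sym M_match] := LM_corr.
rewrite (leq_trans (card_bigcup_le _ _)) // /deg_in -sum1dep_card.
apply: leq_sum => u _; apply/card_le1_eqP => c c'; rewrite !inE => Mc Mc'.
by apply: (M_match u v (phi u)); rewrite -M_sym.
Qed.

Lemma partial_coloring_extend (S : {set T}) (phi : T -> C) (v : T) (c : C) :
  v \in S -> partial_coloring (S :\ v) phi -> c \in L v :\: blocked (S :\ v) phi v ->
  partial_coloring S (fun w => if w == v then c else phi w).
Proof.
have [M_adj M_sym _] := LM_corr.
move=> vS [phi_L phi_M]; rewrite inE => /andP[c_free cL].
have free u : u \in S -> u != v -> ~~ M v u c (phi u).
  move=> uS uv; apply: contra c_free => Mvu; have [vu _ _] := M_adj _ _ _ _ Mvu.
  by apply/bigcupP; exists u; rewrite ?inE ?uv ?uS.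
split=> [w wS|u w uS wS].
  by case: eqP => [->|/eqP wv] //; apply: phi_L; rewrite !inE wv.
case: (eqVneq u v) => [->|uv]; case: (eqVneq w v) => [->|wv].
- by rewrite adj_irr.
- by move=> _; apply: free.
- by rewrite M_sym => _; apply: free.
- by apply: phi_M; rewrite !inE ?uv ?wv.
Qed.

Lemma partial_coloring_exists (c0 : C) :
  (forall S, S != set0 -> exists2 v, v \in S & deg_in adj S v < #|L v|) ->
  forall S, exists phi, partial_coloring S phi.
Proof.
move=> low_deg S; have [n] := ubnP #|S|; elim: n S => // n IH S S_card.
have [->|S_neq0] := eqVneq S set0; first by exists (fun=> c0); split=> v; rewrite inE.
have [v vS deg_v] := low_deg S S_neq0.
have [phi phi_col] : exists phi, partial_coloring (S :\ v) phi.
  by apply: IH; move: S_card; rewrite (cardsD1 v S) vS.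
have : 0 < #|L v :\: blocked (S :\ v) phi v|.
  have blocked_lt : #|blocked (S :\ v) phi v| < #|L v|.
    apply: leq_ltn_trans (card_blocked _ _ _) (leq_ltn_trans _ deg_v).
    by apply/subset_leq_card/subsetP => u; rewrite !inE => /andP[/andP[_ ->] ->].
  rewrite cardsD subn_gt0.
  exact: leq_ltn_trans (subset_leq_card (subsetIr _ _)) blocked_lt.
rewrite card_gt0 => /set0Pn[c c_free].
by exists (fun w => if w == v then c else phi w); apply: partial_coloring_extend.
Qed.

End GreedyColoring.

Lemma dp_colorable_coloring_number (T : finType) (adj : rel T) k :
  irreflexive adj -> coloring_number_le adj k -> dp_colorable adj k.
Proof.
move=> adj_irr col_le C L M L_card LM_corr.
have [t0 _|T0] := pickP (fun _ : T => true); last first.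
  exists (fun v => False_rect C (Bool.diff_true_false (T0 v))).
  by split=> [v|u v]; have := T0 v.
have [c0 _] : exists c0, c0 \in L t0.
  have [|v _ deg_v] := col_le [set: T]; first by apply/set0Pn; exists t0.
  by apply/set0Pn; rewrite -card_gt0 L_card (leq_ltn_trans (leq0n _) deg_v).
have [|phi [phi_L phi_M]] := partial_coloring_exists adj_irr LM_corr c0 ^~ [set: T].
  by move=> S /col_le[v vS deg_v]; exists v; rewrite ?L_card.
by exists phi; split=> [v|u v]; [apply: phi_L | apply: phi_M]; rewrite ?inE.
Qed.

Lemma is_chi_DP_le (T : finType) (adj : rel T) n :
  dp_colorable adj n -> exists k, is_chi_DP adj k /\ k <= n.
Proof.
elim/ltn_ind: n => n IH n_col.
have [[m lt_mn m_col]|no_smaller] := classic (exists2 m, m < n & dp_colorable adj m).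
  have [k [k_chi le_km]] := IH m lt_mn m_col.
  by exists k; split=> //; apply: leq_trans le_km (ltnW lt_mn).
exists n; split=> //; split=> // k k_col; rewrite leqNgt.
by apply/negP => lt_kn; apply: no_smaller; exists k.
Qed.

Theorem theorem4 (T : finType) (adj : rel T)
    (adj_sym : symmetric adj) (adj_irr : irreflexive adj) (a : nat) :
  is_AT adj a -> exists k, is_chi_DP adj k /\ k <= 2 * a.
Proof.
move=> [[D [D_orient outdeg_lt _]] _].
apply/is_chi_DP_le/dp_colorable_coloring_number => //.
exact: (coloring_number_le_orientation adj_sym D_orient outdeg_lt).
Qed.
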